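(* Let $L$ be an oriented, ordered, possibly non-compatible virtual link diagram with an affine bilabeling $C$. Then the multi-variable affine index polynomial $p_{(L,C)}$ is an invariant of $(L,C)$ under Reidemeister moves performed away from the starting points of the coloring. Moreover, it is a Vassiliev invariant of order one of the pair $(L,C)$.
   Context: **Diagrams.** A virtual link diagram is an oriented planar diagram of ordered closed curves $L_1,\dots,L_n$ (components) with classical crossings (with over/under information) and virtual crossings. **Crossing conventions.** Draw a classical crossing with both strands oriented upward. - The bottom-left-to-top-right strand has index change $-1$; the bottom-right-to-top-left strand has index change $+1$. - The crossing is positive ($\operatorname{sgn}=+1$) if the overstrand is the bottom-left-to-top-right strand, and negative otherwise. - Self-crossings have both strands on one component; external crossings have strands on different components. - The weight $n_i$ of component $L_i$ is the sum of the index changes of $L_i$ over its passages through external classical crossings. **Affine bilabeling $C$.** - Each component $L_i$ gets a starting point with bilabel $(a^{(i)}_1,a^{(i)}_2)$ of formal integer variables, distinct for different components. - Travel along $L_i$ in its orientation, carrying the bilabel. It is unchanged at virtual crossings. - On passing a classical crossing with index change $\varepsilon$, the first entry changes by $\varepsilon$ at a self-crossing, and the second entry changes by $\varepsilon$ at an external crossing. - On returning to the starting point, the label is $(a^{(i)}_1,a^{(i)}_2+n_i)$. This discrepancy is absorbed at the starting point, which carries the weight $n_i$; the labeling is discontinuous there. **Weights and polynomial.** Let $|(x,y)|=x+y$. With both strands drawn upward: - if $c$ is positive, $W(c)=|\text{bottom-left}|-|\text{top-left}|$; - if $c$ is negative, $W(c)=|\text{bottom-right}|-|\text{top-right}|$.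 Then $p_{(L,C)}(t_1,\dots,t_n)=\sum_c\operatorname{sgn}(c)(t_{o(c)}^{W(c)}-1)$, summed over classical crossings, where $o(c)$ is the component of the overstrand. **Vassiliev invariants.** - Singular virtual links have finitely many double points, assumed away from the starting points. - The extension of an invariant $V$ is $V(L_\times)=V(L_+)-V(L_-)$, with $L_\pm$ the positive/negative resolutions of a double point, applied iteratively. - Colorings of singular links are obtained by treating double points as crossings for label propagation, which is sign-independent. - Order $\le m$ means the extension vanishes on all singular links with more than $m$ double points. - Order one means order $\le 1$ but not order $\le 0$. *)

From HB Require Import structures.
From mathcomp Require Import all_boot all_order all_algebra.
From mathcomp Require Import finmap.
From mathcomp Require Import monalg.

Set Implicit Arguments.
Unset Strict Implicit.
Unset Printing Implicit Defensive.

Import Order.TTheory GRing.Theory Num.Theory.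
Local Open Scope ring_scope.

(* Combinatorial model of (singular) virtual link diagrams with starting     *)
(* points: Gauss diagrams cut open at the starting points.                   *)
(* A passage through a classical crossing (or double point) is a pair        *)
(* (c, b) : nat * bool where c is the name of the crossing and b = true iff  *)
(* the passing strand is the bottom-left-to-top-right strand when both       *)
(* strands are drawn upward (index change -1); b = false means the           *)
(* bottom-right-to-top-left strand (index change +1).                        *)
(* Component i (i : 'I_n) is the sequence of passages met when travelling    *)
(* along L_i from its starting point.  Virtual crossings are invisible.      *)
(* Each crossing has a kind: positive, negative, or double point.  For a     *)
(* positive crossing the BL->TR strand is the overstrand, for a negative one *)
(* the BR->TL strand is the overstrand.                                      *)

Inductive ckind := Pos | Neg | Dbl.

Definition ckind_eqb (x y : ckind) : bool :=
  match x, y with Pos, Pos | Neg, Neg | Dbl, Dbl => true | _, _ => false end.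
Lemma ckind_eqP : Equality.axiom ckind_eqb.
Proof. by case; case; constructor. Qed.
HB.instance Definition _ := hasDecEq.Build ckind ckind_eqP.

Definition passage := (nat * bool)%type.

Record diagram (n : nat) := Diagram {
  words : 'I_n -> seq passage;
  kind : nat -> ckind }.

Section Diagrams.
Variable n : nat.
Implicit Types D : diagram n.

Definition all_passages D : seq passage := flatten [seq words D i | i <- enum 'I_n].

Definition crossings D : seq nat := undup [seq p.1 | p <- all_passages D & p.2].

Definition wf D : Prop :=
  forall c : nat, count_mem (c, true) (all_passages D) = count_mem (c, false) (all_passages D)
                  /\ (count_mem (c, true) (all_passages D) <= 1)%N.

Definition dpoints D : seq nat := [seq c <- crossings D | kind D c == Dbl].

Definition classical D : Prop := forall c, c \in crossings D -> kind D c != Dbl.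

(* Labels take values in G * G for an additive group G; [u] is the integer 1 *)
(* in G and [a i] the starting bilabel of component i. *)
Variables (G : zmodType) (u : G) (a : 'I_n -> G * G).

Definition index_change (p : passage) : G := if p.2 then - u else u.

Definition selfp D (i : 'I_n) (p : passage) : bool := (p.1, ~~ p.2) \in words D i.

(* bilabel of component i just before its k-th passage (k = 0 is the starting *)
(* point; the label just after the k-th passage is [label D i k.+1]) *)
Definition label D (i : 'I_n) (k : nat) : G * G :=
  ((a i).1 + \sum_(p <- take k (words D i) | selfp D i p) index_change p,
   (a i).2 + \sum_(p <- take k (words D i) | ~~ selfp D i p) index_change p).

Definition lnorm (x : G * G) : G := x.1 + x.2.

Definition tmon (o : 'I_n) (g : G) : {malg int[{ffun 'I_n -> G}]} :=
  << [ffun j => if j == o then g else 0] >>.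

Definition aff_term D (c : nat) : {malg int[{ffun 'I_n -> G}]} :=
  let pL := (c, true) in let pR := (c, false) in
  match [pick i | pL \in words D i], [pick i | pR \in words D i] with
  | Some iL, Some iR =>
      let kL := index pL (words D iL) in
      let kR := index pR (words D iR) in
      match kind D c with
      | Pos => (* W = |bottom-left| - |top-left|, overstrand = BL->TR strand *)
          tmon iL (lnorm (label D iL kL) - lnorm (label D iR kR.+1)) - << 0 >>
      | Neg => (* W = |bottom-right| - |top-right|, overstrand = BR->TL strand *)
          - (tmon iR (lnorm (label D iR kR) - lnorm (label D iL kL.+1)) - << 0 >>)
      | Dbl => 0
      end
  | _, _ => 0
  end.

Definition aff_poly D : {malg int[{ffun 'I_n -> G}]} :=
  \sum_(c <- crossings D) aff_term D c.

End Diagrams.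

(* The group of formal integer combinations of 1 and the 2n formal variables *)
(* a^(i)_1, a^(i)_2. *)
Definition formalG (n : nat) : zmodType := (int * {ffun 'I_n -> int * int})%type.
Definition formal_u (n : nat) : formalG n := (1, 0).
Definition formal_labels (n : nat) (i : 'I_n) : formalG n * formalG n :=
  ((0, [ffun j => if j == i then (1, 0) else 0]),
   (0, [ffun j => if j == i then (0, 1) else 0])).

Definition affp (n : nat) (D : diagram n) :=
  aff_poly (formal_u n) (@formal_labels n) D.

(* A context has k holes (inr j), each occurring exactly once; filling the *)
(* holes with segments of passages gives the words of a diagram. *)
Section Moves.
Variable n : nat.

Definition fill k (w : seq (passage + 'I_k)) (s : 'I_k -> seq passage) : seq passage :=
  flatten [seq match x with inl p => [:: p] | inr j => s j end | x <- w].

Definition holes_once k (C : 'I_n -> seq (passage + 'I_k)) : Prop :=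
  forall j : 'I_k, (\sum_(i < n) count_mem (inr j) (C i))%N = 1%N.

Definition ctx_free k (C : 'I_n -> seq (passage + 'I_k)) (c : nat) : Prop :=
  forall i b, inl (c, b) \notin C i.

Definition is_classical_kind (x : ckind) : bool := x != Dbl.
Definition over_flag (x : ckind) : bool := x == Pos.
Definition sgnk (x : ckind) : int := if x == Pos then 1 else -1.

Definition R1step (D D' : diagram n) : Prop :=
  exists (C : 'I_n -> seq (passage + 'I_1)) (c : nat) (b : bool),
    [/\ holes_once C /\ ctx_free C c,
        (forall i, words D i = fill (C i) (fun _ => [::])),
        (forall i, words D' i = fill (C i) (fun _ => [:: (c, b); (c, ~~ b)])),
        is_classical_kind (kind D' c) &
        (forall c', c' != c -> kind D' c' = kind D c')].

(* R2: creation of a bigon with new crossings c, d of opposite signs; hole 0 *)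
(* is the overstrand segment, hole 1 the understrand segment *)
Definition R2step (D D' : diagram n) : Prop :=
  exists (C : 'I_n -> seq (passage + 'I_2)) (c d : nat) (swap : bool),
    let kc := kind D' c in let kd := kind D' d in
    let sover := [:: (c, over_flag kc); (d, over_flag kd)] in
    let sunder := if swap then [:: (d, ~~ over_flag kd); (c, ~~ over_flag kc)]
                  else [:: (c, ~~ over_flag kc); (d, ~~ over_flag kd)] in
    [/\ [/\ holes_once C, ctx_free C c, ctx_free C d & c != d],
        (forall i, words D i = fill (C i) (fun _ => [::])),
        (forall i, words D' i = fill (C i) (fun j => if j == ord0 then sover else sunder)),
        [/\ is_classical_kind kc, is_classical_kind kd & kc != kd] &
        (forall c', c' != c -> c' != d -> kind D' c' = kind D c')].

(* R3: crossings x (top over middle), y (top over bottom), z (middle over *)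
(* bottom); hole 0 = top segment, hole 1 = middle, hole 2 = bottom.  eT, eM, *)
(* eB record whether x precedes y on the top segment, x precedes z on the  *)
(* middle one, y precedes z on the bottom one.  The sign conditions are     *)
(* exactly those for which the configuration is a planar triangle; the move *)
(* reverses the three segments and keeps the signs. *)
Definition R3step (D D' : diagram n) : Prop :=
  exists (C : 'I_n -> seq (passage + 'I_3)) (x y z : nat) (eT eM eB : bool),
    let kx := kind D x in let ky := kind D y in let kz := kind D z in
    let ord2 (e : bool) (p q : passage) := if e then [:: p; q] else [:: q; p] in
    let sT := ord2 eT (x, over_flag kx) (y, over_flag ky) in
    let sM := ord2 eM (x, ~~ over_flag kx) (z, over_flag kz) in
    let sB := ord2 eB (y, ~~ over_flag ky) (z, ~~ over_flag kz) in
    let segs (j : 'I_3) := if val j == 0%N then sT else if val j == 1%N then sM else sB in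
    let sgnb (e : bool) : int := if e then 1 else -1 in
    [/\ [/\ holes_once C, uniq [:: x; y; z] &
           [&& is_classical_kind kx, is_classical_kind ky & is_classical_kind kz]],
        sgnb eM * sgnk kx = sgnb eB * sgnk ky /\
        sgnb eT * sgnk kx = sgnb eB * sgnk kz,
        (forall i, words D i = fill (C i) segs),
        (forall i, words D' i = fill (C i) (fun j => rev (segs j))) &
        kind D' =1 kind D].

Definition rstep (D D' : diagram n) : Prop := [\/ R1step D D', R2step D D' | R3step D D'].

Definition rmove (D D' : diagram n) : Prop := rstep D D' \/ rstep D' D.

Definition resolve (D : diagram n) (c : nat) (k : ckind) : diagram n :=
  Diagram (words D) (fun c' => if c' == c then k else kind D c').

End Moves.

Section Vassiliev.
Variable M : nat -> zmodType.
Variable V : forall n, diagram n -> M n.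

Fixpoint vext_rec n (D : diagram n) (cs : seq nat) : M n :=
  match cs with
  | [::] => V D
  | c :: cs' => vext_rec (resolve D c Pos) cs' - vext_rec (resolve D c Neg) cs'
  end.

Definition vext n (D : diagram n) : M n := vext_rec D (dpoints D).

Definition vorder_le (m : nat) : Prop :=
  forall n (D : diagram n), wf D -> (m < size (dpoints D))%N -> vext D = 0.

End Vassiliev.

(* Since |(x, y)| = x + y, the distinction between self and external crossings
   disappears in the weights: the norm of the bilabel at a point of L_i is
   |a^(i)| plus the total index change met since the starting point.  Hence
   W(c) = |a^(o)| - |a^(u)| + d(c), where the integer d(c) only depends on the
   index changes before the over- and understrand passages of c.
   A Reidemeister move away from the starting points substitutes segments of
   the components by segments with the same total index change, so crossings
   outside the move keep their summand.  The crossing of an R1 kink has W = 0;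
   the two crossings of an R2 bigon have equal weights and opposite signs; an
   R3 move reverses three two-passage segments and the sign conditions of a
   planar triangle say exactly that every d(c) is preserved.  Nothing uses the
   absence of double points, so invariance also holds for singular diagrams.
   The summand of a crossing depends only on the Gauss words and on its own
   sign, so V(L_+) - V(L_-) at a double point only depends on the words: all
   second differences vanish.  A single external double point between two
   components gives t_1^w + t_2^w' - 2 with w != 0, so the order is not 0. *)

From mathcomp Require Import all_boot all_order all_algebra.
From mathcomp Require Import finmap monalg.
From mathcomp Require Import zify ring.

Set Implicit Arguments.
Unset Strict Implicit.
Unset Printing Implicit Defensive.
Import Order.TTheory GRing.Theory Num.Theory.
Local Open Scope ring_scope.

(** * Index sums and weights *)

Definition index_sum (w : seq passage) : int := \sum_(p <- w) index_change 1 p.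

Definition prefix_sum (w : seq passage) (p : passage) : int :=
  index_sum (take (index p w) w).

(* The integer d(c) for a crossing with overstrand passage [po] on the word [wo]
   and understrand passage [pu] on [wu]. *)
Definition index_shift (wo wu : seq passage) (po pu : passage) : int :=
  prefix_sum wo po - (prefix_sum wu pu + index_change 1 pu).

Lemma index_sum_cat w1 w2 : index_sum (w1 ++ w2) = index_sum w1 + index_sum w2.
Proof. exact: big_cat. Qed.

Lemma index_sum_rev w : index_sum (rev w) = index_sum w.
Proof. exact: big_rev. Qed.

Lemma index_sum_take_index_succ w p : p \in w ->
  index_sum (take (index p w).+1 w) = prefix_sum w p + index_change 1 p.
Proof.
move=> pw; rewrite (take_nth p) ?index_mem // -cats1 index_sum_cat nth_index //.
by rewrite /index_sum big_seq1.
Qed.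

Lemma prefix_sum_notin w p : p \notin w -> prefix_sum w p = index_sum w.
Proof. by move=> pw; rewrite /prefix_sum memNindex // take_size. Qed.

Lemma index_change_scale (G : zmodType) (u : G) p :
  index_change u p = u *~ index_change 1 p.
Proof. by rewrite /index_change; case: p.2; rewrite ?mulrN1z ?mulr1z. Qed.

Section Weights.
Variables (n : nat) (G : zmodType) (u : G) (a : 'I_n -> G * G).
Implicit Types (D : diagram n) (k : ckind).

Lemma lnorm_label D i m :
  lnorm (label u a D i m) = lnorm (a i) + u *~ index_sum (take m (words D i)).
Proof.
rewrite /lnorm /label /= addrACA /index_sum mulrz_sumr [in RHS](bigID (selfp D i)) /=.
by congr (_ + (_ + _)); apply: eq_bigr => p _; rewrite index_change_scale.
Qed.

Definition signed_term k (o : 'I_n) (g : G) : {malg int[{ffun 'I_n -> G}]} :=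
  match k with
  | Pos => tmon o g - << 0 >>
  | Neg => - (tmon o g - << 0 >>)
  | Dbl => 0
  end.

Definition crossing_weight (io iu : 'I_n) (d : int) : G :=
  lnorm (a io) - lnorm (a iu) + u *~ d.

Lemma tmon0 (o : 'I_n) : tmon o (0 : G) = << 0 >>.
Proof. by congr << _ >>; apply/ffunP => j; rewrite !ffunE; case: ifP. Qed.

Lemma signed_term_weight0 k (o : 'I_n) d :
  d = 0 -> signed_term k o (crossing_weight o o d) = 0.
Proof.
by move->; rewrite /crossing_weight subrr add0r mulr0z; case: k; rewrite /= ?tmon0 ?subrr ?oppr0.
Qed.

Lemma signed_term_opp k k' (o : 'I_n) g :
  k != Dbl -> k' != Dbl -> k != k' -> signed_term k o g + signed_term k' o g = 0.
Proof. by case: k; case: k' => // _ _ _; [exact: addrN | exact: addNr]. Qed.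

Lemma aff_termE D c (io iu : 'I_n) :
  let po := (c, over_flag (kind D c)) in let pu := (c, ~~ over_flag (kind D c)) in
  kind D c != Dbl ->
  (forall i, (po \in words D i) = (i == io)) -> (forall i, (pu \in words D i) = (i == iu)) ->
  aff_term u a D c =
  signed_term (kind D c) io (crossing_weight io iu (index_shift (words D io) (words D iu) po pu)).
Proof.
move=> po pu kc memo memu.
have pick_only b i0 : (forall i, ((c, b) \in words D i) = (i == i0)) ->
    [pick i | (c, b) \in words D i] = Some i0.
  by move=> mem; case: pickP => [i | /(_ i0)]; rewrite mem ?eqxx // => /eqP->.
have puw : pu \in words D iu by rewrite memu.
have weightE : lnorm (label u a D io (index po (words D io))) -
      lnorm (label u a D iu (index pu (words D iu)).+1) =
    crossing_weight io iu (index_shift (words D io) (words D iu) po pu).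
  rewrite !lnorm_label index_sum_take_index_succ // /crossing_weight /index_shift.
  by rewrite mulrzBr opprD addrACA.
rewrite /aff_term -weightE {weightE puw}; rewrite /po /pu in memo memu *.
by case: (kind D c) kc memo memu => //= _ memo memu;
  rewrite (pick_only _ _ memo) (pick_only _ _ memu).
Qed.

Lemma aff_term_absent D c : (forall i, (c, true) \notin words D i) -> aff_term u a D c = 0.
Proof. by move=> nc; rewrite /aff_term; case: pickP => [i | //]; rewrite (negbTE (nc i)). Qed.

Lemma aff_term_eq_prefix D D' c :
  kind D c = kind D' c ->
  (forall i b, ((c, b) \in words D i) = ((c, b) \in words D' i)) ->
  (forall i b, prefix_sum (words D i) (c, b) = prefix_sum (words D' i) (c, b)) ->
  aff_term u a D c = aff_term u a D' c.
Proof.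
move=> kc mem pre.
have normE i b : lnorm (label u a D i (index (c, b) (words D i))) =
    lnorm (label u a D' i (index (c, b) (words D' i))).
  by rewrite !lnorm_label; congr (_ + u *~ _); exact: pre.
have normSE i b : lnorm (label u a D i (index (c, b) (words D i)).+1) =
    lnorm (label u a D' i (index (c, b) (words D' i)).+1).
  have [cw | cNw] := boolP ((c, b) \in words D i).
    rewrite !lnorm_label !index_sum_take_index_succ -?mem //.
    by congr (_ + u *~ (_ + _)); exact: pre.
  have cNw' : (c, b) \notin words D' i by rewrite -mem.
  rewrite !lnorm_label !memNindex // !take_oversize //.
  by rewrite -(prefix_sum_notin cNw) -(prefix_sum_notin cNw') pre.
rewrite /aff_term kc (eq_pick (fun i => mem i true)) (eq_pick (fun i => mem i false)).
case: [pick i | _] => [iL|]; last by [].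
case: [pick i | _] => [iR|]; last by [].
by rewrite !normE !normSE.
Qed.

Lemma aff_term_eq_words D D' c :
  words D = words D' -> kind D c = kind D' c -> aff_term u a D c = aff_term u a D' c.
Proof. by move=> w kc; rewrite /aff_term /label /selfp w kc. Qed.

Lemma signed_term_PosNeg_neq0 (o o' : 'I_n) (g g' : G) :
  o != o' -> g != 0 -> signed_term Pos o g - signed_term Neg o' g' != 0.
Proof.
move=> oo' g0; pose m : {ffun 'I_n -> G} := [ffun j => if j == o then g else 0].
have m0 : (0 == m) = false by apply: contraNF g0 => /eqP/ffunP/(_ o); rewrite !ffunE eqxx => <-.
have m'm : ([ffun j => if j == o' then g' else 0] == m) = false.
  apply: contraNF g0 => /eqP/ffunP/(_ o); rewrite !ffunE eqxx (negbTE oo') => <-.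
  by rewrite eqxx.
apply/eqP => /(congr1 (mcoeff m)); apply/eqP.
rewrite /= /tmon opprK mcoeff0 mcoeffD !mcoeffB !mcoeffU -/m eqxx m0 m'm.
by rewrite !mulr0n !subr0 oner_neq0.
Qed.

End Weights.

(** * Substituting segments into the holes of a context *)

Section Fill.
Variable k : nat.
Implicit Types (w : seq (passage + 'I_k)) (s : 'I_k -> seq passage).

Lemma fill_cat w1 w2 s : fill (w1 ++ w2) s = fill w1 s ++ fill w2 s.
Proof. by rewrite /fill map_cat flatten_cat. Qed.

Lemma fill_hole1 s j : fill [:: inr j] s = s j.
Proof. exact: cats0. Qed.

Lemma mem_fill w s p :
  (p \in fill w s) = (inl p \in w) || has (fun x => if x is inr j then p \in s j else false) w.
Proof.
elim: w => [|[q|j] w IH] //=; rewrite mem_cat IH in_cons; last by rewrite orbCA.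
by rewrite in_cons orbF orbA.
Qed.

Lemma mem_fill_ctx w s p : (forall j, p \notin s j) -> (p \in fill w s) = (inl p \in w).
Proof.
move=> pNs; rewrite mem_fill; case: (inl p \in w) => //=.
by apply/hasP => -[[q|j] _ //]; rewrite (negbTE (pNs j)).
Qed.

Lemma mem_fill_hole w s p j :
  inl p \notin w -> (forall j', (p \in s j') = (j' == j)) -> (p \in fill w s) = (inr j \in w).
Proof.
move=> pNw ps; rewrite mem_fill (negbTE pNw) /=.
apply/hasP/idP => [[[q|j'] xw //]|jw]; first by rewrite ps => /eqP <-.
by exists (inr j); rewrite ?ps.
Qed.

Lemma count_fill_ge w s p j :
  (count_mem (inl p) w + count_mem (inr j) w * count_mem p (s j) <= count_mem p (fill w s))%N.
Proof.
elim: w => [|x w IH] //; rewrite -cat1s fill_cat count_cat /=.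
case: x => [q|j'] /=; first by rewrite -[inl q == _]/(q == p) addn0 add0n -addnA leq_add2l.
rewrite count_cat fill_hole1 !add0n; have [->|j'j] := eqVneq j' j.
  by rewrite eqxx mulnDl mul1n addnCA leq_add2l.
by rewrite -[inr j' == _]/(j' == j) (negbTE j'j) add0n (leq_trans IH) ?leq_addl.
Qed.

Lemma index_sum_fill w s s' :
  (forall j, index_sum (s j) = index_sum (s' j)) -> index_sum (fill w s) = index_sum (fill w s').
Proof.
move=> ss'; elim: w => [|x w IH] //=; rewrite !index_sum_cat IH.
by case: x => // j; rewrite ss'.
Qed.

Lemma prefix_sum_fill_ctx w s p : (forall j, p \notin s j) ->
  prefix_sum (fill w s) p = index_sum (fill (take (index (inl p) w) w) s).
Proof.
move=> pNs; elim: w => [|[q|j] w IH] //.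
  rewrite /prefix_sum /= eq_sym; have [->|qp] := eqVneq q p; first by rewrite eqxx.
  have -> : (inl q == inl p :> passage + 'I_k) = false by apply: contraNF qp => /eqP[->].
  by rewrite /= /index_sum !big_cons; congr (_ + _); exact: IH.
rewrite -cat1s fill_cat fill_hole1 /prefix_sum index_cat (negbTE (pNs j)) take_cat.
rewrite ltnNge leq_addr /= addKn [take _ _]/= -cat1s fill_cat fill_hole1 !index_sum_cat.
by rewrite -IH.
Qed.

Definition hole_prefix w s (j : 'I_k) : int := index_sum (fill (take (index (inr j) w) w) s).

Lemma prefix_sum_fill_hole w s p j :
  inr j \in w -> inl p \notin w -> (forall j', (p \in s j') = (j' == j)) ->
  prefix_sum (fill w s) p = hole_prefix w s j + prefix_sum (s j) p.
Proof.
move=> jw pNw ps.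
have jNpre : inr j \notin take (index (inr j) w) w by apply/negP => /index_ltn; rewrite ltnn.
have pNpre : p \notin fill (take (index (inr j) w) w) s.
  rewrite mem_fill negb_or (contra (@mem_take _ _ _ _) pNw) /=.
  apply/hasPn => -[//|j'] j'pre; rewrite ps; apply: contraNneq jNpre => j'j.
  by rewrite -{1}j'j.
rewrite /prefix_sum -{1 2}(cat_take_drop (index (inr j) w) w) (drop_nth (inr j)) ?index_mem //.
rewrite nth_index // -cat1s !fill_cat fill_hole1 index_cat (negbTE pNpre) take_cat.
rewrite ltnNge leq_addr /= addKn index_cat ps eqxx takel_cat ?index_size //.
by rewrite index_sum_cat.
Qed.

Lemma hole_prefix_eq w s s' j :
  (forall j, index_sum (s j) = index_sum (s' j)) -> hole_prefix w s j = hole_prefix w s' j.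
Proof. exact: index_sum_fill. Qed.

End Fill.

(** * Sums with finite support *)

Section SumsWithSupport.
Variable V : zmodType.
Implicit Types (X L M : seq nat) (f g : nat -> V).

Lemma big_uniq_filter_mem X M f : uniq X -> uniq M -> {subset X <= M} ->
  \sum_(c <- X) f c = \sum_(c <- M | c \in X) f c.
Proof.
move=> uX uM XM; rewrite -[RHS]big_filter; apply: perm_big.
apply: uniq_perm; rewrite ?filter_uniq //.
by move=> c; rewrite mem_filter andb_idr //; apply: XM.
Qed.

Lemma big_uniq_support L M f : uniq L -> uniq M -> {subset L <= M} ->
  (forall c, c \notin L -> f c = 0) -> \sum_(c <- L) f c = \sum_(c <- M) f c.
Proof.
move=> uL uM LM f0; rewrite (big_uniq_filter_mem f uL uM LM) [RHS](bigID (mem L)) /=.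
by rewrite [X in _ = _ + X]big1 ?addr0.
Qed.

Lemma big_eq_off L L' X f g : uniq L -> uniq L' -> uniq X ->
  (forall c, c \notin L -> f c = 0) -> (forall c, c \notin L' -> g c = 0) ->
  (forall c, c \notin X -> f c = g c) -> \sum_(c <- X) f c = \sum_(c <- X) g c ->
  \sum_(c <- L) f c = \sum_(c <- L') g c.
Proof.
move=> uL uL' uX f0 g0 fg onX; set M := undup (X ++ L ++ L').
have uM : uniq M := undup_uniq _.
have sub Y : {subset Y <= X ++ L ++ L'} -> {subset Y <= M} by move=> YM c /YM; rewrite mem_undup.
have XM : {subset X <= M} by apply: sub => c cX; rewrite mem_cat cX.
rewrite (big_uniq_support uL uM _ f0); last by apply: sub => c cL; rewrite !mem_cat cL orbT.
rewrite (big_uniq_support uL' uM _ g0); last by apply: sub => c cL; rewrite !mem_cat cL !orbT.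
rewrite (bigID (mem X)) [RHS](bigID (mem X)) /= -!(big_uniq_filter_mem _ uX uM XM) onX.
by congr (_ + _); apply: eq_bigr => c /fg.
Qed.

Lemma big_cons2_eq (f g : nat -> V) c d : f c + f d = g c + g d ->
  \sum_(x <- [:: c; d]) f x = \sum_(x <- [:: c; d]) g x.
Proof. by rewrite !big_cons !big_nil !addr0. Qed.

Lemma big_eq_support L L' f g : uniq L -> uniq L' ->
  (forall c, c \notin L -> f c = 0) -> (forall c, c \notin L' -> g c = 0) -> f =1 g ->
  \sum_(c <- L) f c = \sum_(c <- L') g c.
Proof.
move=> uL uL' f0 g0 fg; apply: (big_eq_off uL uL' (isT : uniq [::]) f0 g0 (fun c _ => fg c)).
by rewrite !big_nil.
Qed.

Lemma sumrB_eq_off1 L (c : nat) (f f' g g' : nat -> V) :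
  (forall x, x != c -> f x = f' x) -> (forall x, x != c -> g x = g' x) ->
  f c = g c -> f' c = g' c ->
  \sum_(x <- L) f x - \sum_(x <- L) f' x = \sum_(x <- L) g x - \sum_(x <- L) g' x.
Proof.
move=> ff' gg' fg f'g'; rewrite -!sumrB; apply: eq_bigr => x _.
by have [->|xc] := eqVneq x c; rewrite ?fg ?f'g' // ff' // gg' // !subrr.
Qed.

End SumsWithSupport.

Section AffPolySum.
Variables (n : nat) (G : zmodType) (u : G) (a : 'I_n -> G * G).
Implicit Types D : diagram n.

Lemma aff_term_notin_crossings D c : c \notin crossings D -> aff_term u a D c = 0.
Proof.
move=> cND; apply: aff_term_absent => i; apply: contra cND => ci.
rewrite mem_undup; apply/mapP; exists (c, true) => //; rewrite mem_filter /=.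
by apply/flattenP; exists (words D i) => //; apply/mapP; exists i; rewrite ?mem_enum.
Qed.

Lemma aff_poly_eq_off D D' (X : seq nat) : uniq X ->
  (forall c, c \notin X -> aff_term u a D c = aff_term u a D' c) ->
  \sum_(c <- X) aff_term u a D c = \sum_(c <- X) aff_term u a D' c ->
  aff_poly u a D = aff_poly u a D'.
Proof.
move=> uX off onX; apply: (big_eq_off (undup_uniq _) (undup_uniq _) uX _ _ off onX) => c;
  exact: aff_term_notin_crossings.
Qed.

Lemma aff_poly_eq D D' : (forall c, aff_term u a D c = aff_term u a D' c) ->
  aff_poly u a D = aff_poly u a D'.
Proof.
move=> eqt; apply: (big_eq_support (undup_uniq _) (undup_uniq _) _ _ eqt) => c;
  exact: aff_term_notin_crossings.
Qed.

End AffPolySum.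

Section Context.
Variables (n k : nat) (C : 'I_n -> seq (passage + 'I_k)).

Section Holes.
Hypothesis hC : holes_once C.

Lemma holes_once_mem j i : inr j \in C i -> forall i', (inr j \in C i') = (i' == i).
Proof.
move=> ji i'; have [->|i'i] := eqVneq i' i; first by rewrite ji.
apply/negbTE/count_memPn.
have : (0 < count_mem (inr j) (C i))%N by rewrite lt0n; apply: contraL ji => /eqP/count_memPn.
by have := hC j; rewrite (bigD1 i) // (bigD1 i') //=; lia.
Qed.

Lemma holes_once_exists j : exists i, inr j \in C i.
Proof.
case: (pickP (fun i => inr j \in C i)) => [i ji | noj]; first by exists i.
by move: (hC j); rewrite big1 // => i _; apply/count_memPn; rewrite noj.
Qed.

Lemma wf_ctx_free (D : diagram n) (s : 'I_k -> seq passage) p j :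
  wf D -> (forall i, words D i = fill (C i) s) -> p \in s j -> forall i, inl p \notin C i.
Proof.
move=> wfD wD ps i; apply/negP => pCi.
have le1 : (\sum_(i < n) count_mem p (words D i) <= 1)%N.
  have -> : (\sum_(i < n) count_mem p (words D i) = count_mem p (all_passages D))%N.
    by rewrite /all_passages count_flatten sumnE !big_map /index_enum unlock.
  by case: p {ps pCi} => c [] //; have [-> ->] := wfD c.
have ge : (count_mem (inl p) (C i) + count_mem p (s j) <=
           \sum_(i < n) count_mem p (words D i))%N.
  apply: (@leq_trans (\sum_(i < n) count_mem p (fill (C i) s))); last first.
    by apply: eq_leq; apply: eq_bigr => i' _; rewrite wD.
  apply: leq_trans (_ : _ <= \sum_(i' < n) (count_mem (inl p) (C i') +
      count_mem (inr j) (C i') * count_mem p (s j)))%N _; last first.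
    by apply: leq_sum => i' _; exact: count_fill_ge.
  rewrite big_split /= -big_distrl /= hC mul1n leq_add2r.
  by rewrite (bigD1 i) //= leq_addr.
have : (0 < count_mem (inl p) (C i))%N by rewrite lt0n; apply: contraL pCi => /eqP/count_memPn.
have : (0 < count_mem p (s j))%N by rewrite lt0n; apply: contraL ps => /eqP/count_memPn.
lia.
Qed.

End Holes.

Variables (G : zmodType) (u : G) (a : 'I_n -> G * G).
Implicit Types (D : diagram n) (s : 'I_k -> seq passage).

Lemma aff_term_fill_nil D c : (forall i, words D i = fill (C i) (fun _ => [::])) ->
  ctx_free C c -> aff_term u a D c = 0.
Proof. by move=> wD cfree; apply: aff_term_absent => i; rewrite wD mem_fill_ctx. Qed.

Lemma aff_term_fill_ctx D D' s s' c :
  (forall i, words D i = fill (C i) s) -> (forall i, words D' i = fill (C i) s') ->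
  (forall j, index_sum (s j) = index_sum (s' j)) ->
  (forall j b, (c, b) \notin s j) -> (forall j b, (c, b) \notin s' j) ->
  kind D c = kind D' c -> aff_term u a D c = aff_term u a D' c.
Proof.
move=> wD wD' ss' cNs cNs' kc; apply: aff_term_eq_prefix => // i b.
  by rewrite wD wD' !mem_fill_ctx.
by rewrite wD wD' !prefix_sum_fill_ctx //; exact: index_sum_fill.
Qed.

Lemma aff_term_fill_hole D s c jo ju io iu :
  let po := (c, over_flag (kind D c)) in let pu := (c, ~~ over_flag (kind D c)) in
  holes_once C -> (forall i, words D i = fill (C i) s) -> ctx_free C c -> kind D c != Dbl ->
  (forall j, (po \in s j) = (j == jo)) -> (forall j, (pu \in s j) = (j == ju)) ->
  inr jo \in C io -> inr ju \in C iu ->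
  aff_term u a D c = signed_term (kind D c) io (crossing_weight u a io iu
    (hole_prefix (C io) s jo - hole_prefix (C iu) s ju + index_shift (s jo) (s ju) po pu)).
Proof.
move=> po pu hC wD cfree kc memo memu jo_io ju_iu.
rewrite (@aff_termE _ _ u a D c io iu kc) => [|i|i]; first last.
- by rewrite wD (mem_fill_hole (cfree i _) memu) (holes_once_mem hC ju_iu).
- by rewrite wD (mem_fill_hole (cfree i _) memo) (holes_once_mem hC jo_io).
rewrite /index_shift !wD (prefix_sum_fill_hole jo_io (cfree _ _) memo).
rewrite (prefix_sum_fill_hole ju_iu (cfree _ _) memu).
by congr (signed_term _ _ (crossing_weight _ _ _ _ _)); rewrite /po /pu; ring.
Qed.

Lemma aff_term_fill_hole_eq D D' s s' c jo ju io iu :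
  let po := (c, over_flag (kind D c)) in let pu := (c, ~~ over_flag (kind D c)) in
  holes_once C -> (forall i, words D i = fill (C i) s) -> (forall i, words D' i = fill (C i) s') ->
  (forall j, index_sum (s j) = index_sum (s' j)) ->
  ctx_free C c -> kind D c != Dbl -> kind D' c = kind D c ->
  (forall j, (po \in s j) = (j == jo)) -> (forall j, (pu \in s j) = (j == ju)) ->
  (forall j, (po \in s' j) = (j == jo)) -> (forall j, (pu \in s' j) = (j == ju)) ->
  index_shift (s jo) (s ju) po pu = index_shift (s' jo) (s' ju) po pu ->
  inr jo \in C io -> inr ju \in C iu ->
  aff_term u a D c = aff_term u a D' c.
Proof.
move=> po pu hC wD wD' ss' cfree kc kc' memo memu memo' memu' shift jo_io ju_iu.
have kcD' : kind D' c != Dbl by rewrite kc'.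
have memoD' j : ((c, over_flag (kind D' c)) \in s' j) = (j == jo) by rewrite kc'.
have memuD' j : ((c, ~~ over_flag (kind D' c)) \in s' j) = (j == ju) by rewrite kc'.
rewrite (aff_term_fill_hole hC wD cfree kc memo memu jo_io ju_iu).
rewrite (aff_term_fill_hole hC wD' cfree kcD' memoD' memuD' jo_io ju_iu) kc' shift.
by rewrite !(hole_prefix_eq _ _ ss').
Qed.

End Context.

(** * Reidemeister moves *)

Lemma index_sum_kink (c : nat) (b : bool) : index_sum [:: (c, b); (c, ~~ b)] = 0.
Proof. by case: b; rewrite /index_sum !big_cons big_nil. Qed.

Lemma index_shift_kink (c : nat) (b o : bool) :
  let w := [:: (c, b); (c, ~~ b)] in index_shift w w (c, o) (c, ~~ o) = 0.
Proof.
by case: b; case: o; rewrite /index_shift /prefix_sum /= !xpair_eqE !eqxx /index_sum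
  ?big_cons ?big_nil.
Qed.

Definition bigon_segs (c d : nat) (oc od sw : bool) (j : 'I_2) : seq passage :=
  if j == ord0 then [:: (c, oc); (d, od)]
  else if sw then [:: (d, ~~ od); (c, ~~ oc)] else [:: (c, ~~ oc); (d, ~~ od)].

Lemma bigon_segs_crossing c d oc od sw j p :
  p \in bigon_segs c d oc od sw j -> p.1 \in [:: c; d].
Proof.
rewrite /bigon_segs; case: (j == ord0); last case: sw;
by rewrite ?inE => /orP[] /eqP->; rewrite /= ?inE eqxx ?orbT.
Qed.

Section Bigon.
Variables (c d : nat) (oc od sw : bool).
Hypotheses (cd : c != d) (od_oc : od = ~~ oc).
Let S := bigon_segs c d oc od sw.

Lemma index_sum_bigon_segs j : index_sum (S j) = 0.
Proof.
rewrite /S /bigon_segs od_oc; case: (j == ord0); last case: sw;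
by case: oc; rewrite /index_sum !big_cons big_nil.
Qed.

Lemma mem_bigon_segs :
  [/\ forall j, ((c, oc) \in S j) = (j == ord0), forall j, ((c, ~~ oc) \in S j) = (j == ord_max),
      forall j, ((d, od) \in S j) = (j == ord0) & forall j, ((d, ~~ od) \in S j) = (j == ord_max)].
Proof.
have dc : d != c by rewrite eq_sym.
have jmax (j : 'I_2) : (j == ord_max) = ~~ (j == ord0) by case: j => [[|[|]]].
split=> j; rewrite ?jmax /S /bigon_segs od_oc; case: (j == ord0); case: sw;
by case: oc; rewrite !inE !xpair_eqE ?(negbTE cd) ?(negbTE dc) ?eqxx.
Qed.

Lemma index_shift_bigon : index_shift (S ord0) (S ord_max) (c, oc) (c, ~~ oc) =
  index_shift (S ord0) (S ord_max) (d, od) (d, ~~ od).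
Proof.
have dc : d != c by rewrite eq_sym.
rewrite /S /bigon_segs /= od_oc; case: oc; case: sw;
by rewrite /index_shift /prefix_sum /= !xpair_eqE !eqxx (negbTE cd) (negbTE dc) /index_sum
  ?big_cons ?big_nil.
Qed.

End Bigon.

(* [sgnk k] of the R3 move is convertible to [sgb (over_flag k)]. *)
Definition sgb (b : bool) : int := if b then 1 else -1.

Definition pair_seg (e : bool) (p q : passage) : seq passage := if e then [:: p; q] else [:: q; p].

Lemma pair_segC e p q : pair_seg e p q = pair_seg (~~ e) q p.
Proof. by case: e. Qed.

Lemma rev_pair_seg e p q : rev (pair_seg e p q) = pair_seg (~~ e) p q.
Proof. by case: e. Qed.

Lemma mem_pair_seg e p q r : (r \in pair_seg e p q) = (r == p) || (r == q).
Proof. by case: e; rewrite !inE // orbC. Qed.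

Lemma prefix_sum_pair_seg e p q : p != q ->
  prefix_sum (pair_seg e p q) p = if e then 0 else index_change 1 q.
Proof.
move=> pq; have qp : q != p by rewrite eq_sym.
by case: e; rewrite /prefix_sum /= eqxx ?(negbTE qp) /= ?eqxx /index_sum ?big_nil ?big_seq1.
Qed.

Lemma index_shift_pair_seg_rev e1 e2 p p' q q' : p != p' -> q != q' ->
  sgb e1 * index_change 1 p' = sgb e2 * index_change 1 q' ->
  index_shift (rev (pair_seg e1 p p')) (rev (pair_seg e2 q q')) p q =
  index_shift (pair_seg e1 p p') (pair_seg e2 q q') p q.
Proof.
move=> pp' qq'; rewrite !rev_pair_seg /index_shift !prefix_sum_pair_seg //.
by case: e1; case: e2; rewrite /= ?mul1r ?mulN1r => signs; lia.
Qed.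

Lemma triangle_signs (x y z : nat) eT eM eB ox oy oz :
  sgb eM * sgb ox = sgb eB * sgb oy -> sgb eT * sgb ox = sgb eB * sgb oz ->
  [/\ sgb eT * index_change 1 (y, oy) = sgb eM * index_change 1 (z, oz),
      sgb (~~ eT) * index_change 1 (x, ox) = sgb eB * index_change 1 (z, ~~ oz) &
      sgb (~~ eM) * index_change 1 (x, ~~ ox) = sgb (~~ eB) * index_change 1 (y, ~~ oy)].
Proof. by case: eT eM eB ox oy oz => [] [] [] [] [] [] /eqP h1 /eqP h2; split; apply/eqP. Qed.

Definition top_hole : 'I_3 := ord0.
Definition mid_hole : 'I_3 := Ordinal (isT : (1 < 3)%N).
Definition bot_hole : 'I_3 := ord_max.

Definition triangle_segs (x y z : nat) (eT eM eB ox oy oz : bool) (j : 'I_3) : seq passage :=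
  if val j == 0%N then pair_seg eT (x, ox) (y, oy)
  else if val j == 1%N then pair_seg eM (x, ~~ ox) (z, oz)
  else pair_seg eB (y, ~~ oy) (z, ~~ oz).

Lemma mem_triangle_segs x y z eT eM eB ox oy oz : uniq [:: x; y; z] ->
  let S := triangle_segs x y z eT eM eB ox oy oz in
  [/\ (forall j, ((x, ox) \in S j) = (j == top_hole)) /\
        (forall j, ((x, ~~ ox) \in S j) = (j == mid_hole)),
      (forall j, ((y, oy) \in S j) = (j == top_hole)) /\
        (forall j, ((y, ~~ oy) \in S j) = (j == bot_hole)) &
      (forall j, ((z, oz) \in S j) = (j == mid_hole)) /\
        (forall j, ((z, ~~ oz) \in S j) = (j == bot_hole))].
Proof.
rewrite /= !inE !negb_or andbT => /andP[/andP[xy xz] yz].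
have yx : y != x by rewrite eq_sym. have zx : z != x by rewrite eq_sym.
have zy : z != y by rewrite eq_sym.
by do !split; case=> -[|[|[|m]]] lt3 //; rewrite /triangle_segs /= mem_pair_seg !xpair_eqE ?eqxx
  ?(negbTE xy) ?(negbTE yx) ?(negbTE xz) ?(negbTE zx) ?(negbTE yz) ?(negbTE zy) /=;
  case: (ox); case: (oy); case: (oz).
Qed.

Lemma triangle_segs_cover x y z eT eM eB ox oy oz t b :
  uniq [:: x; y; z] -> t \in [:: x; y; z] ->
  exists j, (t, b) \in triangle_segs x y z eT eM eB ox oy oz j.
Proof.
move=> uxyz; have [[xT xM] [yT yB] [zM zB]] := mem_triangle_segs eT eM eB ox oy oz uxyz.
have flag o : b = o \/ b = ~~ o by case: b; case: o; auto.
rewrite !inE => /or3P[] /eqP->.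
- by case: (flag ox) => ->; [exists top_hole; rewrite xT | exists mid_hole; rewrite xM].
- by case: (flag oy) => ->; [exists top_hole; rewrite yT | exists bot_hole; rewrite yB].
- by case: (flag oz) => ->; [exists mid_hole; rewrite zM | exists bot_hole; rewrite zB].
Qed.

Lemma triangle_segs_crossing x y z eT eM eB ox oy oz j p :
  p \in triangle_segs x y z eT eM eB ox oy oz j -> p.1 \in [:: x; y; z].
Proof.
rewrite /triangle_segs; case: (val j == 0%N); last case: (val j == 1%N);
by rewrite mem_pair_seg => /orP[] /eqP->; rewrite !inE eqxx ?orbT.
Qed.

Lemma index_shift_triangle_rev x y z eT eM eB ox oy oz :
  uniq [:: x; y; z] ->
  sgb eM * sgb ox = sgb eB * sgb oy -> sgb eT * sgb ox = sgb eB * sgb oz ->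
  let S := triangle_segs x y z eT eM eB ox oy oz in
  let shift_rev (jo ju : 'I_3) (t : nat) (o : bool) :=
    index_shift (S jo) (S ju) (t, o) (t, ~~ o) =
    index_shift (rev (S jo)) (rev (S ju)) (t, o) (t, ~~ o) in
  [/\ shift_rev top_hole mid_hole x ox, shift_rev top_hole bot_hole y oy &
      shift_rev mid_hole bot_hole z oz].
Proof.
rewrite /= !inE !negb_or andbT => /andP[/andP[xy xz] yz] sgn1 sgn2.
have [signx signy signz] := triangle_signs x y z sgn1 sgn2.
have neq t t' b b' : t != t' -> (t, b) != (t', b') by move=> tt'; rewrite xpair_eqE negb_and tt'.
split; symmetry; rewrite /triangle_segs /=.
- by apply: index_shift_pair_seg_rev; rewrite ?neq.
- by rewrite (pair_segC eT); apply: index_shift_pair_seg_rev; rewrite ?neq // eq_sym.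
- rewrite (pair_segC eM) (pair_segC eB).
  by apply: index_shift_pair_seg_rev; rewrite ?neq // eq_sym.
Qed.

Section Reidemeister.
Variables (n : nat) (G : zmodType) (u : G) (a : 'I_n -> G * G).
Implicit Types D : diagram n.

Lemma aff_poly_R1 D D' : R1step D D' -> aff_poly u a D = aff_poly u a D'.
Proof.
case=> C [c [b [[hC cfree] wD wD' kc kother]]].
pose kink (_ : 'I_1) := [:: (c, b); (c, ~~ b)].
have sums (j : 'I_1) : index_sum [::] = index_sum (kink j).
  by rewrite /kink index_sum_kink /index_sum big_nil.
apply: (@aff_poly_eq_off _ _ u a D D' [:: c]); first by [].
  move=> x; rewrite inE => xc; apply: (aff_term_fill_ctx u a wD wD' sums) => [j b'|j b'|].
  - by [].
  - by rewrite !inE !xpair_eqE (negbTE xc).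
  - exact/esym/kother.
have [i0 i0C] := holes_once_exists hC ord0.
have inkink o (j : 'I_1) : ((c, o) \in kink j) = (j == ord0).
  by rewrite ord1 eqxx !inE !xpair_eqE eqxx; case: o; case: (b).
apply: eq_big_seq => x; rewrite inE => /eqP->; rewrite (aff_term_fill_nil u a wD cfree).
rewrite (aff_term_fill_hole u a hC wD' cfree kc (inkink _) (inkink _) i0C i0C).
by rewrite signed_term_weight0 // subrr add0r index_shift_kink.
Qed.

Lemma aff_poly_R2 D D' : R2step D D' -> aff_poly u a D = aff_poly u a D'.
Proof.
case=> C [c [d [sw /= [[hC cfree dfree cd] wD wD' [kc kd kcd] kother]]]].
set oc := over_flag (kind D' c) in wD'; set od := over_flag (kind D' d) in wD'.
have od_oc : od = ~~ oc by rewrite /od /oc; move: kc kd kcd; case: (kind D' c); case: (kind D' d).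
set S := bigon_segs c d oc od sw.
have wD'S : forall i, words D' i = fill (C i) S := wD'.
have sums j : index_sum [::] = index_sum (S j).
  by rewrite index_sum_bigon_segs // /index_sum big_nil.
have [cO cU dO dU] := mem_bigon_segs sw cd od_oc.
apply: (@aff_poly_eq_off _ _ u a D D' [:: c; d]); first by rewrite /= inE cd.
  move=> x xNcd; apply: (aff_term_fill_ctx u a wD wD'S sums) => [j b|j b|]; first by [].
    by apply: contra xNcd => /bigon_segs_crossing.
  by rewrite kother //; apply: contraNneq xNcd => ->; rewrite !inE eqxx ?orbT.
have [i0 i0C] := holes_once_exists hC ord0.
have [i1 i1C] := holes_once_exists hC ord_max.
apply: big_cons2_eq.
rewrite (aff_term_fill_nil u a wD cfree) (aff_term_fill_nil u a wD dfree) addr0.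
rewrite (aff_term_fill_hole u a hC wD'S cfree kc cO cU i0C i1C).
rewrite (aff_term_fill_hole u a hC wD'S dfree kd dO dU i0C i1C).
by rewrite -(index_shift_bigon sw cd od_oc) signed_term_opp.
Qed.

Lemma aff_poly_R3 D D' : R3step D D' -> wf D \/ wf D' -> aff_poly u a D = aff_poly u a D'.
Proof.
case=> C [x [y [z [eT [eM [eB /= [[hC uxyz kxyz] [sgn1 sgn2] wD wD' kk]]]]]]] wfDD'.
case/and3P: kxyz => kx ky kz.
set ox := over_flag (kind D x) in wD wD'; set oy := over_flag (kind D y) in wD wD'.
set oz := over_flag (kind D z) in wD wD'.
set S := triangle_segs x y z eT eM eB ox oy oz.
have wDS : forall i, words D i = fill (C i) S := wD.
have wD'S : forall i, words D' i = fill (C i) (fun j => rev (S j)) := wD'.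
have sums j : index_sum (S j) = index_sum (rev (S j)) by rewrite index_sum_rev.
have [[xT xM] [yT yB] [zM zB]] := mem_triangle_segs eT eM eB ox oy oz uxyz.
have memrev p jo : (forall j, (p \in S j) = (j == jo)) -> forall j, (p \in rev (S j)) = (j == jo).
  by move=> pS j; rewrite mem_rev.
have cfree t : t \in [:: x; y; z] -> ctx_free C t.
  move=> txyz i b; have [j tbS] := triangle_segs_cover eT eM eB ox oy oz b uxyz txyz.
  case: wfDD' => [wfD | wfD']; first exact: (wf_ctx_free hC wfD wDS tbS).
  by apply: (wf_ctx_free hC wfD' wD'S (j := j)); rewrite mem_rev.
have [shift_x shift_y shift_z] := index_shift_triangle_rev uxyz sgn1 sgn2.
have [iT iTC] := holes_once_exists hC top_hole.
have [iM iMC] := holes_once_exists hC mid_hole.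
have [iB iBC] := holes_once_exists hC bot_hole.
apply: aff_poly_eq => t.
case: (boolP (t \in [:: x; y; z])) => [|tNxyz]; last first.
  apply: (aff_term_fill_ctx u a wDS wD'S sums) => [j b|j b|]; last exact/esym/kk.
    by apply: contra tNxyz => /triangle_segs_crossing.
  by rewrite mem_rev; apply: contra tNxyz => /triangle_segs_crossing.
move=> txyz; move: (cfree t txyz) => tfree; move: txyz; rewrite !inE => /or3P[] /eqP tE; subst t.
- exact: (aff_term_fill_hole_eq u a hC wDS wD'S sums tfree kx (kk x) xT xM (memrev _ _ xT)
    (memrev _ _ xM) shift_x iTC iMC).
- exact: (aff_term_fill_hole_eq u a hC wDS wD'S sums tfree ky (kk y) yT yB (memrev _ _ yT)
    (memrev _ _ yB) shift_y iTC iBC).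
- exact: (aff_term_fill_hole_eq u a hC wDS wD'S sums tfree kz (kk z) zM zB (memrev _ _ zM)
    (memrev _ _ zB) shift_z iMC iBC).
Qed.
Lemma aff_poly_rstep D D' : rstep D D' -> wf D \/ wf D' -> aff_poly u a D = aff_poly u a D'.
Proof.
case=> [step|step|step] wfDD'; [exact: aff_poly_R1 | exact: aff_poly_R2 | exact: aff_poly_R3].
Qed.

End Reidemeister.

(** * Vassiliev order *)

Section Resolution.
Variables (n : nat) (G : zmodType) (u : G) (a : 'I_n -> G * G).
Implicit Types E : diagram n.

Definition resolution_jump E (c : nat) :=
  aff_poly u a (resolve E c Pos) - aff_poly u a (resolve E c Neg).

Lemma resolution_jump_words E E' c : words E = words E' ->
  resolution_jump E c = resolution_jump E' c.
Proof.
move=> wE; have crE k : crossings (resolve E c k) = crossings E'.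
  by rewrite /crossings /all_passages /= wE.
rewrite /resolution_jump /aff_poly !crE.
by apply: (@sumrB_eq_off1 _ _ c) => [x xc|x xc||]; apply: aff_term_eq_words;
  rewrite /= ?eqxx ?(negbTE xc).
Qed.

End Resolution.

Lemma vext_rec_cons (M : nat -> zmodType) (V : forall m, diagram m -> M m) n (E : diagram n) c cs :
  vext_rec V E (c :: cs) = vext_rec V (resolve E c Pos) cs - vext_rec V (resolve E c Neg) cs.
Proof. by []. Qed.

Lemma vext_rec_affp_words n (E E' : diagram n) cs : words E = words E' -> (0 < size cs)%N ->
  vext_rec affp E cs = vext_rec affp E' cs.
Proof.
elim: cs E E' => [|c [|c' cs] IH] E E' wE size_gt0.
- by case: (notF size_gt0).
- exact: resolution_jump_words.
by rewrite vext_rec_cons (IH (resolve E c Pos) (resolve E' c Pos) wE isT)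
  (IH (resolve E c Neg) (resolve E' c Neg) wE isT).
Qed.

Lemma affp_vorder_le1 : vorder_le affp 1.
Proof.
move=> n D _; rewrite /vext; case: (dpoints D) => [|c cs] size_gt1; first by case: (notF size_gt1).
rewrite vext_rec_cons.
by rewrite (@vext_rec_affp_words _ (resolve D c Pos) (resolve D c Neg) cs erefl size_gt1) subrr.
Qed.

Definition external_double_point : diagram 2 :=
  Diagram (fun i : 'I_2 => [:: (0%N, i == ord0)]) (fun _ => Dbl).

Lemma all_passages_external : all_passages external_double_point = [:: (0%N, true); (0%N, false)].
Proof. by rewrite /all_passages !enum_ordSl enum_ord0. Qed.

Lemma wf_external : wf external_double_point.
Proof. by move=> c; rewrite all_passages_external /= !xpair_eqE /=; case: (0 == c)%N. Qed.

Lemma dpoints_external : dpoints external_double_point = [:: 0%N].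
Proof. by rewrite /dpoints /crossings all_passages_external. Qed.

Lemma affp_not_vorder_le0 : ~ vorder_le affp 0.
Proof.
move=> /(_ 2%N external_double_point wf_external); rewrite /vext dpoints_external => /(_ isT).
set E := external_double_point; rewrite vext_rec_cons.
have affpE k : affp (resolve E 0 k) = aff_term (formal_u 2) (@formal_labels 2) (resolve E 0 k) 0.
  rewrite /affp /aff_poly (_ : crossings _ = [:: 0%N]); first exact: big_seq1.
  by rewrite /crossings -[all_passages _]/(all_passages E) all_passages_external.
rewrite /vext_rec !affpE.
have jmax (i : 'I_2) : (i == ord_max) = ~~ (i == ord0) by case: i => [[|[|]]].
have memT i : ((0%N, true) \in words (resolve E 0 Pos) i) = (i == ord0).
  by rewrite inE xpair_eqE eqxx eq_sym eqb_id.
have memF i : ((0%N, false) \in words (resolve E 0 Pos) i) = (i == ord_max).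
  by rewrite inE xpair_eqE eqxx eq_sym eqbF_neg jmax.
rewrite (@aff_termE _ _ _ _ (resolve E 0 Pos) 0 ord0 ord_max isT memT memF).
rewrite (@aff_termE _ _ _ _ (resolve E 0 Neg) 0 ord_max ord0 isT memF memT).
apply/eqP/signed_term_PosNeg_neq0 => //; apply/eqP => /(congr1 fst).
rewrite /crossing_weight /index_shift /prefix_sum /= /index_sum !big_nil /index_change /=.
(* the constant coordinate of the weight is -1 *)
by move/eqP; vm_compute.
Qed.

Theorem proposition6 :
  (forall (n : nat) (D D' : diagram n),
      wf D -> classical D -> rmove D D' -> affp D = affp D') /\
  (vorder_le affp 1 /\ ~ vorder_le affp 0).
Proof.
split; last by split; [exact: affp_vorder_le1 | exact: affp_not_vorder_le0].
move=> n D D' wfD _ [step|step]; first exact: aff_poly_rstep step (or_introl wfD).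
by symmetry; apply: aff_poly_rstep step (or_intror wfD).
Qed.
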